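(* Let $\bar\delta,\underline\delta\ge1$ be integers, $\pi$ the switching policy $(\bar\delta,\underline\delta)$, and $N>\max\{\bar\delta,\underline\delta\}$. Let $\nu_{i,j,\delta}$ be the stationary distribution of $\{S_t\}$ under $\pi$ in the original (untruncated) system, and $\nu_{i,j,\delta}(N)$ that of the truncated chain under $\pi$. Then $\nu_{i,j,\delta}(N)=\nu_{i,j,\delta}$ for all $(i,j,\delta)\in\mathcal S_N\setminus\{(1,0,N),(0,1,N)\}$, and $$\nu_{1,0,N}(N)=\frac{\bar qp_f}{1-\bar qp_f}\nu_{1,0,N-1},\qquad \nu_{0,1,N}(N)=\frac{\bar pp_f}{1-\bar pp_f}\nu_{0,1,N-1}.$$ Moreover, $\mathcal L(\pi,N)=\mathcal L(\pi)-\sigma(\pi,N)$, where $$\sigma(\pi,N)=\frac{\beta\nu_{0,0,0}\,p\,\bar q^{N}p_f^{N-\bar\delta+1}}{(1-\bar qp_f)^2}+\frac{(1-\beta)\nu_{1,1,0}\,q\,\bar p^{N}p_f^{N-\underline\delta+1}}{(1-\bar pp_f)^2}.$$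
   Context: Fix $p,q\in(0,1)$, $\bar p=1-p$, $\bar q=1-q$. The source $\{X_t\}$ is a Markov chain on $\{0,1\}$ with $\Pr[X_{t+1}=1\mid X_t=0]=p$, $\Pr[X_{t+1}=0\mid X_t=1]=q$; channel i.i.d. Bernoulli with success probability $p_s\in(0,1]$, independent of the source, $p_f=1-p_s$. Estimate dynamics: if $A_t=1$ and the transmission succeeds then $\hat X_{t+1}=X_{t+1}$, otherwise $\hat X_{t+1}=\hat X_t$. Original system: age $\Delta_{t+1}=\Delta_t+1$ if $X_{t+1}\ne\hat X_{t+1}$, else $0$; state $S_t=(X_t,\hat X_t,\Delta_t)\in\mathcal S=\{(0,0,0),(1,1,0)\}\cup\{(1,0,\delta),(0,1,\delta):\delta\ge1\}$, $S_1=(0,0,0)$. Truncated system with level $N$: age $\Delta_{t+1}=\min(\Delta_t+1,N)$ if $X_{t+1}\ne\hat X_{t+1}$, else $0$; state space $\mathcal S_N=\{(0,0,0),(1,1,0)\}\cup\{(1,0,\delta),(0,1,\delta):1\le\delta\le N\}$. In both, per-state cost $c(s)=\beta\delta$ for $s=(1,0,\delta)$, $(1-\beta)\delta$ for $s=(0,1,\delta)$, $0$ for synced states, $\beta\in[0,1]$; per-stage cost $\ell(s,a)=\mathbb E[c(S_{t+1})\mid S_t=s,A_t=a]+\lambda\mathbb 1\{a=1\}$, $\lambda\ge0$; $\mathcal L(\pi)$ and $\mathcal L(\pi,N)$ denote the average costs $\limsup_{T\to\infty}\frac1T\sum_{t=1}^T\mathbb E^\pi[\ell(S_t,A_t)\mid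 S_1=(0,0,0)]$ in the original and truncated systems, respectively. For integers $\bar\delta,\underline\delta\ge1$, the switching policy $(\bar\delta,\underline\delta)$ transmits iff $S_t=(1,0,\delta)$ with $\delta\ge\bar\delta$ or $S_t=(0,1,\delta)$ with $\delta\ge\underline\delta$. *)

From Stdlib Require Import Reals Lra Bool Arith.
From Coquelicot Require Import Coquelicot.
Open Scope R_scope.

(** States (i, j, delta) with i = X_t, j = \hat X_t encoded as booleans
    (false = 0, true = 1).  The valid states are described by [in_orig]
    and [in_trunc]; values of functions at other triples are never used. *)
Definition state : Type := (bool * bool * nat)%type.

Definition state_eqb (s t : state) : bool :=
  match s, t with
  | (a, b, c), (a', b', c') => Bool.eqb a a' && Bool.eqb b b' && Nat.eqb c c'
  end.

Definition ind (s' : state) (s : state) : R := if state_eqb s s' then 1 else 0.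

Definition in_orig (s : state) : Prop :=
  s = (false, false, 0%nat) \/ s = (true, true, 0%nat) \/
  exists d : nat, (1 <= d)%nat /\ (s = (true, false, d) \/ s = (false, true, d)).

Definition in_trunc (N : nat) (s : state) : Prop :=
  s = (false, false, 0%nat) \/ s = (true, true, 0%nat) \/
  exists d : nat, (1 <= d <= N)%nat /\ (s = (true, false, d) \/ s = (false, true, d)).

Definition src (p q : R) (x x' : bool) : R :=
  match x, x' with
  | false, false => 1 - p
  | false, true => p
  | true, false => q
  | true, true => 1 - q
  end.

(** next state given X_{t+1} = x', \hat X_{t+1} = xh', previous age d;
    [age] is the age-update map (S for the original system,
    fun d => min (d+1) N for the truncated one). *)
Definition next (age : nat -> nat) (x' xh' : bool) (d : nat) : state :=
  if Bool.eqb x' xh' then (x', xh', 0%nat) else (x', xh', age d).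

Definition age_orig (d : nat) : nat := S d.
Definition age_trunc (N : nat) (d : nat) : nat := Nat.min (S d) N.

(** E[g(S_{t+1}) | S_t = s, A_t = a]; ps = success probability, pf = 1 - ps *)
Definition Enext (p q ps : R) (age : nat -> nat) (a : bool) (s : state)
  (g : state -> R) : R :=
  let '(x, xh, d) := s in
  let out (x' : bool) : R :=
    if a then ps * g (next age x' x' d) + (1 - ps) * g (next age x' xh d)
    else g (next age x' xh d) in
  src p q x false * out false + src p q x true * out true.

Definition trans (p q ps : R) (age : nat -> nat) (a : bool) (s s' : state) : R :=
  Enext p q ps age a s (ind s').

Definition switching (dbar dund : nat) (s : state) : bool :=
  match s with
  | (true, false, d) => Nat.leb dbar d
  | (false, true, d) => Nat.leb dund d
  | _ => false
  end.

Definition cost (beta : R) (s : state) : R :=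
  match s with
  | (true, false, d) => beta * INR d
  | (false, true, d) => (1 - beta) * INR d
  | _ => 0
  end.

Definition stage (p q ps : R) (age : nat -> nat) (beta lam : R)
  (s : state) (a : bool) : R :=
  Enext p q ps age a s (cost beta) + (if a then lam else 0).

Definition sum_orig (f : state -> R) : R :=
  f (false, false, 0%nat) + f (true, true, 0%nat)
  + Series (fun k => f (true, false, S k)) + Series (fun k => f (false, true, S k)).

Definition summable_orig (f : state -> R) : Prop :=
  ex_series (fun k => f (true, false, S k)) /\ ex_series (fun k => f (false, true, S k)).

Fixpoint rsum (n : nat) (f : nat -> R) : R :=
  match n with
  | O => 0
  | S n' => rsum n' f + f n'
  end.

Definition sum_trunc (N : nat) (f : state -> R) : R :=
  f (false, false, 0%nat) + f (true, true, 0%nat)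
  + rsum N (fun k => f (true, false, S k)) + rsum N (fun k => f (false, true, S k)).

Definition stationary_orig (p q ps : R) (dbar dund : nat) (nu : state -> R) : Prop :=
  (forall s, in_orig s -> 0 <= nu s) /\ summable_orig nu /\ sum_orig nu = 1 /\
  forall s', in_orig s' ->
    nu s' = sum_orig (fun s => nu s * trans p q ps age_orig (switching dbar dund s) s s').

Definition stationary_trunc (p q ps : R) (N dbar dund : nat) (nu : state -> R) : Prop :=
  (forall s, in_trunc N s -> 0 <= nu s) /\ sum_trunc N nu = 1 /\
  forall s', in_trunc N s' ->
    nu s' = sum_trunc N (fun s => nu s * trans p q ps (age_trunc N) (switching dbar dund s) s s').

(** distribution of S_{t+1} (t = 0 is time 1, S_1 = (0,0,0)) *)
Fixpoint dist (sum : (state -> R) -> R) (K : state -> state -> R) (t : nat)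
  : state -> R :=
  match t with
  | O => ind (false, false, 0%nat)
  | S t' => fun s' => sum (fun s => dist sum K t' s * K s s')
  end.

Definition avg_cost (sum : (state -> R) -> R) (age : nat -> nat)
  (p q ps beta lam : R) (pi : state -> bool) : Rbar :=
  let K := fun s s' => trans p q ps age (pi s) s s' in
  LimSup_seq (fun T => / INR (S T) *
    sum_f_R0 (fun t => sum (fun s => dist sum K t s * stage p q ps age beta lam s (pi s))) T).

Definition L_orig (p q ps beta lam : R) (dbar dund : nat) : Rbar :=
  avg_cost sum_orig age_orig p q ps beta lam (switching dbar dund).

Definition L_trunc (p q ps beta lam : R) (N dbar dund : nat) : Rbar :=
  avg_cost (sum_trunc N) (age_trunc N) p q ps beta lam (switching dbar dund).

From Stdlib Require Import Reals Arith Lra Lia FunctionalExtensionality.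
From Coquelicot Require Import Coquelicot.
Open Scope R_scope.

(* The truncated chain is the original one with every state (b, ~b, d), d >= N, lumped into
   (b, ~b, N): with both thresholds below N, all these states transmit and age with the same
   probabilities, so lumping commutes with one step of the dynamics ([inflow_lump]).

   Hence the lumped stationary distribution of the original chain is stationary for the truncated
   one, and it is the only one: invariance determines every state from the two synchronised ones
   through an explicit age profile, and the remaining 2x2 linear system is nonsingular.  The tail of
   the original stationary distribution is geometric with ratio (1 - q) p_f, resp. (1 - p) p_f, which
   gives the mass at age N.

   Lumping also commutes with the distributions at each time t, so the expected stage costs of the
   two systems differ only through the ages lost beyond N, that is, by r times the first moments of
   the tails.  These satisfy m_(t+1) = r m_t + P(S_(t+1) = (b, ~b, N)), so their Cesaro means converge
   to nu_(b,~b,N)(N) / (1 - r): Cesaro means of the truncated chain are asymptotically invariant, and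
   the uniqueness argument shows that every asymptotically invariant sequence of probability vectors
   converges to the stationary distribution. *)

Lemma rsum_ext n f g : (forall k, (k < n)%nat -> f k = g k) -> rsum n f = rsum n g.
Proof.
  induction n as [|n IH]; intros H; simpl; [reflexivity|].
  rewrite IH by (intros; apply H; lia). rewrite H by lia. reflexivity.
Qed.

Lemma rsum_plus n f g : rsum n (fun k => f k + g k) = rsum n f + rsum n g.
Proof. induction n as [|n IH]; simpl; [ring|]. rewrite IH. ring. Qed.

Lemma rsum_scal n c f : rsum n (fun k => c * f k) = c * rsum n f.
Proof. induction n as [|n IH]; simpl; [ring|]. rewrite IH. ring. Qed.

Lemma rsum_eq0 n f : (forall k, (k < n)%nat -> f k = 0) -> rsum n f = 0.
Proof.
  induction n as [|n IH]; intros H; simpl; [reflexivity|].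
  rewrite IH by (intros; apply H; lia). rewrite H by lia. ring.
Qed.

Lemma rsum_add n m f : rsum (n + m) f = rsum n f + rsum m (fun k => f (n + k)%nat).
Proof.
  induction m as [|m IH]; simpl; [rewrite Nat.add_0_r; ring|].
  rewrite Nat.add_succ_r. simpl. rewrite IH. ring.
Qed.

Lemma rsum_succ_l n f : rsum (S n) f = f O + rsum n (fun k => f (S k)).
Proof. induction n as [|n IH]; simpl in *; [ring|]. rewrite IH. ring. Qed.

Lemma rsum_single n f j : (j < n)%nat -> (forall k, (k < n)%nat -> k <> j -> f k = 0) ->
  rsum n f = f j.
Proof.
  induction n as [|n IH]; intros Hj H; [lia|]. simpl.
  destruct (Nat.eq_dec j n) as [->|Hne].
  - rewrite rsum_eq0; [ring|]. intros k Hk. apply H; lia.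
  - rewrite IH by (lia || (intros; apply H; lia)). rewrite (H n) by lia. ring.
Qed.

Lemma rsum_nonneg n f : (forall k, (k < n)%nat -> 0 <= f k) -> 0 <= rsum n f.
Proof.
  induction n as [|n IH]; intros H; simpl; [lra|].
  pose proof (H n ltac:(lia)). pose proof (IH ltac:(intros; apply H; lia)). lra.
Qed.

Lemma rsum_ge_term n f j : (j < n)%nat -> (forall k, (k < n)%nat -> 0 <= f k) -> f j <= rsum n f.
Proof.
  intros Hj H. replace n with (j + S (n - S j))%nat by lia.
  rewrite rsum_add, rsum_succ_l, Nat.add_0_r.
  pose proof (rsum_nonneg j f ltac:(intros; apply H; lia)).
  pose proof (rsum_nonneg (n - S j) (fun k => f (j + S k)%nat) ltac:(intros; apply H; lia)). lra.
Qed.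

Lemma rsum_comm n m (f : nat -> nat -> R) :
  rsum n (fun i => rsum m (fun j => f i j)) = rsum m (fun j => rsum n (fun i => f i j)).
Proof.
  induction n as [|n IH]; simpl.
  - symmetry. apply rsum_eq0. reflexivity.
  - rewrite IH, <- rsum_plus. reflexivity.
Qed.

Lemma sum_f_R0_rsum a n : sum_f_R0 a n = rsum (S n) a.
Proof. induction n as [|n IH]; simpl; [ring|]. rewrite IH. reflexivity. Qed.

Lemma sum_f_R0_telescope (a : nat -> R) T : sum_f_R0 (fun t => a t - a (S t)) T = a O - a (S T).
Proof. induction T as [|T IH]; simpl; [ring|]. rewrite IH. ring. Qed.

Lemma sum_f_R0_scal c f T : sum_f_R0 (fun t => c * f t) T = c * sum_f_R0 f T.
Proof. rewrite scal_sum. apply sum_eq. intros; ring. Qed.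

Lemma is_series_finite a n : (forall k, (n <= k)%nat -> a k = 0) -> is_series a (rsum n a).
Proof.
  intros H. enough (Hlim : is_lim_seq (sum_n a) (rsum n a)) by exact Hlim.
  apply (is_lim_seq_ext_loc (fun _ => rsum n a)); [|apply is_lim_seq_const].
  exists n. intros m Hm. rewrite sum_n_Reals, sum_f_R0_rsum.
  replace (S m) with (n + (S m - n))%nat by lia.
  rewrite rsum_add, (rsum_eq0 (S m - n)); [ring|]. intros k _. apply H. lia.
Qed.

Lemma Series_finite a n : (forall k, (n <= k)%nat -> a k = 0) -> Series a = rsum n a.
Proof. intros H. apply is_series_unique, is_series_finite, H. Qed.

Lemma ex_series_finite a n : (forall k, (n <= k)%nat -> a k = 0) -> ex_series a.
Proof. intros H. eexists. apply (is_series_finite a n H). Qed.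

Lemma Series_single a j : (forall k, k <> j -> a k = 0) -> Series a = a j.
Proof.
  intros H. rewrite (Series_finite a (S j)) by (intros; apply H; lia).
  apply rsum_single; [lia|]. intros k _ Hk. apply H, Hk.
Qed.

Lemma Series_eq0 a : (forall k, a k = 0) -> Series a = 0.
Proof. intros H. rewrite (Series_finite a O); auto. Qed.

Lemma Series_split a n : ex_series a -> Series a = rsum n a + Series (fun k => a (n + k)%nat).
Proof.
  intros H. destruct n as [|n].
  - simpl. rewrite Rplus_0_l. apply Series_ext. reflexivity.
  - rewrite (Series_incr_n a (S n)) by (auto; lia). simpl pred. rewrite sum_f_R0_rsum. reflexivity.
Qed.

Lemma Series_nonneg a : (forall k, 0 <= a k) -> ex_series a -> 0 <= Series a.
Proof.
  intros H He. rewrite <- (Series_eq0 (fun _ => 0)) by reflexivity.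
  apply Series_le; auto. intros; split; [lra|auto].
Qed.

Definition vanishing (u : nat -> R) : Prop := is_lim_seq u 0.

Lemma vanishing_ext u v : (forall T, u T = v T) -> vanishing u -> vanishing v.
Proof. apply is_lim_seq_ext. Qed.

Lemma vanishing_0 : vanishing (fun _ => 0).
Proof. apply is_lim_seq_const. Qed.

Lemma vanishing_lin a b u v : vanishing u -> vanishing v -> vanishing (fun T => a * u T + b * v T).
Proof.
  intros Hu Hv. unfold vanishing. replace 0 with (a * 0 + b * 0) by ring.
  apply is_lim_seq_plus'; apply is_lim_seq_mult'; auto using is_lim_seq_const.
Qed.

Lemma vanishing_scal c u : vanishing u -> vanishing (fun T => c * u T).
Proof.
  intros H. apply (vanishing_ext (fun T => c * u T + 0 * 0)); [intros; ring|].
  apply vanishing_lin; [exact H|apply vanishing_0].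
Qed.

Lemma vanishing_rsum n (f : nat -> nat -> R) :
  (forall k, (k < n)%nat -> vanishing (fun T => f T k)) -> vanishing (fun T => rsum n (f T)).
Proof.
  induction n as [|n IH]; intros H; simpl; [apply vanishing_0|].
  apply (vanishing_ext (fun T => 1 * rsum n (f T) + 1 * f T n)); [intros; ring|].
  apply vanishing_lin; [apply IH; intros; apply H|apply H]; lia.
Qed.

Lemma vanishing_2x2 a c g d (X Y : nat -> R) : a * d + c * g <> 0 ->
  vanishing (fun T => a * X T - c * Y T) -> vanishing (fun T => g * X T + d * Y T) ->
  vanishing X /\ vanishing Y.
Proof.
  intros Hdet H1 H2. split.
  - apply (vanishing_ext (fun T => d / (a * d + c * g) * (a * X T - c * Y T)
                                   + c / (a * d + c * g) * (g * X T + d * Y T)));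
      [intros; field; exact Hdet | apply vanishing_lin; assumption].
  - apply (vanishing_ext (fun T => - g / (a * d + c * g) * (a * X T - c * Y T)
                                   + a / (a * d + c * g) * (g * X T + d * Y T)));
      [intros; field; exact Hdet | apply vanishing_lin; assumption].
Qed.

Lemma is_lim_seq_vanishing u (l : R) : is_lim_seq u l <-> vanishing (fun T => u T - l).
Proof.
  split; intros H.
  - unfold vanishing. replace 0 with (l - l) by ring.
    apply is_lim_seq_minus'; [exact H|apply is_lim_seq_const].
  - apply (is_lim_seq_ext (fun T => (u T - l) + l)); [intros; ring|].
    replace (Finite l) with (Finite (0 + l)) by (f_equal; ring).
    apply is_lim_seq_plus'; [exact H|apply is_lim_seq_const].
Qed.

Lemma is_lim_seq_const_inv (a b : R) : is_lim_seq (fun _ => a) b -> a = b.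
Proof.
  intros H. apply is_lim_seq_unique in H. rewrite Lim_seq_const in H. now inversion H.
Qed.

Lemma vanishing_bounded_avg f B : (forall T, Rabs (f T) <= B) ->
  vanishing (fun T => / INR (S T) * f T).
Proof.
  intros H.
  assert (Hinv : vanishing (fun T => / INR (S T))).
  { unfold vanishing. replace (Finite 0) with (Rbar_inv p_infty) by reflexivity.
    apply is_lim_seq_inv; [|discriminate].
    apply (is_lim_seq_incr_1 INR), is_lim_seq_INR. }
  apply (is_lim_seq_le_le (fun T => - B * / INR (S T)) _ (fun T => B * / INR (S T))).
  - intros T. pose proof (proj1 (Rabs_le_between _ _) (H T)).
    assert (0 < / INR (S T)) by (apply Rinv_0_lt_compat, lt_0_INR; lia). split; nra.
  - apply vanishing_scal, Hinv.
  - apply vanishing_scal, Hinv.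
Qed.

Lemma LimSup_seq_minus_lim (a b : nat -> R) (l : R) : is_lim_seq b l ->
  LimSup_seq (fun n => a n - b n) = Rbar_minus (LimSup_seq a) l.
Proof.
  intros Hb. apply is_lim_seq_spec in Hb. apply is_LimSup_seq_unique.
  pose proof (proj2_sig (ex_LimSup_seq a)) as Ha. change (is_LimSup_seq a (LimSup_seq a)) in Ha.
  destruct (LimSup_seq a) as [L| |]; simpl in *.
  - intros eps. assert (He : 0 < eps / 2) by (destruct eps; simpl; lra).
    destruct (Ha (mkposreal _ He)) as [Hinf [N1 Hsup]].
    destruct (Hb (mkposreal _ He)) as [N2 Hbl]. simpl in *. split.
    + intros N. destruct (Hinf (Nat.max N N2)) as [n [Hn Han]]. exists n. split; [lia|].
      specialize (Hbl n ltac:(lia)). apply Rabs_def2 in Hbl. lra.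
    + exists (Nat.max N1 N2). intros n Hn. specialize (Hsup n ltac:(lia)).
      specialize (Hbl n ltac:(lia)). apply Rabs_def2 in Hbl. lra.
  - intros M0 N. destruct (Hb (mkposreal 1 Rlt_0_1)) as [N2 Hbl].
    destruct (Ha (M0 + l + 1) (Nat.max N N2)) as [n [Hn Han]].
    exists n. split; [lia|]. specialize (Hbl n ltac:(lia)). simpl in Hbl. apply Rabs_def2 in Hbl. lra.
  - intros M0. destruct (Hb (mkposreal 1 Rlt_0_1)) as [N2 Hbl]. destruct (Ha (M0 + l - 1)) as [N1 Han].
    exists (Nat.max N1 N2). intros n Hn. specialize (Hbl n ltac:(lia)). specialize (Han n ltac:(lia)).
    simpl in Hbl. apply Rabs_def2 in Hbl. lra.
Qed.

Definition sync (b : bool) : state := (b, b, 0%nat).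

Definition desync (b : bool) (d : nat) : state := (b, negb b, d).

Lemma sum_orig_states f : sum_orig f =
  f (sync false) + f (sync true)
  + Series (fun k => f (desync true (S k))) + Series (fun k => f (desync false (S k))).
Proof. reflexivity. Qed.

Lemma sum_trunc_states N f : sum_trunc N f =
  f (sync false) + f (sync true)
  + rsum N (fun k => f (desync true (S k))) + rsum N (fun k => f (desync false (S k))).
Proof. reflexivity. Qed.

Ltac simpl_ind :=
  unfold ind, state_eqb; cbn [Bool.eqb andb Nat.eqb];
  repeat match goal with
  | |- context [Nat.eqb ?m ?n] =>
      first [ rewrite (proj2 (Nat.eqb_eq m n)) by lia
            | rewrite (proj2 (Nat.eqb_neq m n)) by lia ]
  end.

Section Model.
Variables (p q ps : R) (dbar dund N : nat).
Hypothesis hp : 0 < p < 1.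
Hypothesis hq : 0 < q < 1.
Hypothesis hps : 0 < ps <= 1.
Hypothesis hdbar : (1 <= dbar < N)%nat.
Hypothesis hdund : (1 <= dund < N)%nat.

Definition pflip (b : bool) : R := if b then q else p.

Definition threshold (b : bool) : nat := if b then dbar else dund.

Definition transmits (b : bool) (d : nat) : R := if (threshold b <=? d)%nat then 1 else 0.

Definition pstay (b : bool) (d : nat) : R := (1 - pflip b) * (1 - ps * transmits b d).

Definition tail_ratio (b : bool) : R := (1 - pflip b) * (1 - ps).

Lemma pflip_bounds b : 0 < pflip b < 1.
Proof. destruct b; assumption. Qed.

Lemma threshold_bounds b : (1 <= threshold b < N)%nat.
Proof. destruct b; simpl; lia. Qed.

Lemma transmits_tail b d : (N - 1 <= d)%nat -> transmits b d = 1.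
Proof.
  intros Hd. unfold transmits. pose proof (threshold_bounds b).
  destruct (Nat.leb_spec (threshold b) d); [reflexivity|lia].
Qed.

Lemma pstay_tail b d : (N - 1 <= d)%nat -> pstay b d = tail_ratio b.
Proof. intros Hd. unfold pstay, tail_ratio. rewrite transmits_tail by lia. ring. Qed.

Lemma pstay_nonneg b d : 0 <= pstay b d.
Proof.
  unfold pstay, transmits. pose proof (pflip_bounds b).
  destruct (threshold b <=? d)%nat; nra.
Qed.

Lemma tail_ratio_bounds b : 0 <= tail_ratio b < 1.
Proof. unfold tail_ratio. pose proof (pflip_bounds b). split; nra. Qed.

Lemma in_trunc_cases t : in_trunc N t ->
  (exists b, t = sync b) \/ (exists b d, (1 <= d <= N)%nat /\ t = desync b d).
Proof.
  intros [->|[->|[d [Hd [->| ->]]]]].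
  - left. exists false. reflexivity.
  - left. exists true. reflexivity.
  - right. exists true, d. auto.
  - right. exists false, d. auto.
Qed.

Lemma in_trunc_sync b : in_trunc N (sync b).
Proof. destruct b; [right; left|left]; reflexivity. Qed.

Lemma in_trunc_desync b d : (1 <= d <= N)%nat -> in_trunc N (desync b d).
Proof. intros Hd. right; right. exists d. destruct b; auto. Qed.

Lemma in_orig_desync b d : (1 <= d)%nat -> in_orig (desync b d).
Proof. intros Hd. right; right. exists d. destruct b; auto. Qed.

Lemma summable_orig_desync (v : state -> R) b :
  summable_orig v -> ex_series (fun k => v (desync b (S k))).
Proof. intros [H1 H2]. destruct b; assumption. Qed.

Definition kernel (age : nat -> nat) (s t : state) : R :=
  trans p q ps age (switching dbar dund s) s t.

Definition inflow (sum : (state -> R) -> R) (age : nat -> nat) (v : state -> R) (t : state) : R :=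
  sum (fun s => v s * kernel age s t).

Lemma Enext_sync age b g :
  Enext p q ps age (switching dbar dund (sync b)) (sync b) g =
  (1 - pflip b) * g (sync b) + pflip b * g (desync (negb b) (age 0%nat)).
Proof. unfold sync, desync. destruct b; unfold Enext, next, src; simpl; ring. Qed.

Lemma Enext_desync age b d g :
  Enext p q ps age (switching dbar dund (desync b d)) (desync b d) g =
  pflip b * g (sync (negb b))
  + (1 - pflip b) * (ps * transmits b d * g (sync b)
                      + (1 - ps * transmits b d) * g (desync b (age d))).
Proof.
  unfold transmits, threshold, sync, desync.
  destruct b; unfold Enext, next, src; simpl;
  [destruct (dbar <=? d)%nat | destruct (dund <=? d)%nat]; ring.
Qed.

Lemma kernel_sync age b t : kernel age (sync b) t =
  (1 - pflip b) * ind t (sync b) + pflip b * ind t (desync (negb b) (age 0%nat)).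
Proof. apply Enext_sync. Qed.

Lemma kernel_desync age b d t : kernel age (desync b d) t =
  pflip b * ind t (sync (negb b))
  + (1 - pflip b) * (ps * transmits b d * ind t (sync b)
                      + (1 - ps * transmits b d) * ind t (desync b (age d))).
Proof. apply Enext_desync. Qed.

Ltac simpl_kernel :=
  rewrite ?kernel_sync, ?kernel_desync;
  unfold sync, desync, age_orig, age_trunc; cbn [negb pflip]; simpl_ind.

Lemma kernel_nonneg age s t : 0 <= kernel age s t.
Proof.
  assert (Hi : forall x y, 0 <= ind x y) by (intros; unfold ind; destruct state_eqb; lra).
  destruct s as [[x xh] d]. unfold kernel, trans, Enext.
  destruct (switching dbar dund (x, xh, d)), x, xh; unfold src;
    repeat (first [apply Hi | lra | apply Rplus_le_le_0_compat | apply Rmult_le_pos]).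
Qed.

Lemma Series_desync_to_sync age v b b' :
  Series (fun k => v (desync b' (S k)) * kernel age (desync b' (S k)) (sync b)) =
  if Bool.eqb b b' then (1 - pflip b) * ps * Series (fun k => transmits b (S k) * v (desync b (S k)))
  else pflip b' * Series (fun k => v (desync b' (S k))).
Proof.
  destruct b, b'; cbn [Bool.eqb]; rewrite <- Series_scal_l; apply Series_ext;
    intros; simpl_kernel; ring.
Qed.

Lemma inflow_orig_sync v b : inflow sum_orig age_orig v (sync b) =
  (1 - pflip b) * v (sync b)
  + pflip (negb b) * Series (fun k => v (desync (negb b) (S k)))
  + (1 - pflip b) * ps * Series (fun k => transmits b (S k) * v (desync b (S k))).
Proof.
  unfold inflow. rewrite sum_orig_states. cbv beta. rewrite !Series_desync_to_sync.
  destruct b; cbn [Bool.eqb negb]; simpl_kernel; ring.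
Qed.

Lemma inflow_orig_desync_1 v b :
  inflow sum_orig age_orig v (desync b 1) = pflip (negb b) * v (sync (negb b)).
Proof.
  unfold inflow. rewrite sum_orig_states. cbv beta.
  destruct b; rewrite !Series_eq0 by (intros; simpl_kernel; ring); simpl_kernel; ring.
Qed.

Lemma inflow_orig_desync_SS v b j :
  inflow sum_orig age_orig v (desync b (S (S j))) = pstay b (S j) * v (desync b (S j)).
Proof.
  unfold inflow, pstay. rewrite sum_orig_states. cbv beta.
  destruct b; [rewrite (Series_single _ j), Series_eq0 | rewrite Series_eq0, (Series_single _ j)];
    intros; simpl_kernel; ring.
Qed.

Lemma rsum_desync_to_sync v b b' :
  rsum N (fun k => v (desync b' (S k)) * kernel (age_trunc N) (desync b' (S k)) (sync b)) =
  if Bool.eqb b b' then (1 - pflip b) * ps * rsum N (fun k => transmits b (S k) * v (desync b (S k)))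
  else pflip b' * rsum N (fun k => v (desync b' (S k))).
Proof.
  destruct b, b'; cbn [Bool.eqb]; rewrite <- rsum_scal; apply rsum_ext;
    intros; simpl_kernel; ring.
Qed.

Lemma inflow_trunc_sync v b : inflow (sum_trunc N) (age_trunc N) v (sync b) =
  (1 - pflip b) * v (sync b)
  + pflip (negb b) * rsum N (fun k => v (desync (negb b) (S k)))
  + (1 - pflip b) * ps * rsum N (fun k => transmits b (S k) * v (desync b (S k))).
Proof.
  unfold inflow. rewrite sum_trunc_states. cbv beta. rewrite !rsum_desync_to_sync.
  destruct b; cbn [Bool.eqb negb]; simpl_kernel; ring.
Qed.

Lemma inflow_trunc_desync_1 v b :
  inflow (sum_trunc N) (age_trunc N) v (desync b 1) = pflip (negb b) * v (sync (negb b)).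
Proof.
  unfold inflow. rewrite sum_trunc_states. cbv beta.
  destruct b; rewrite !rsum_eq0 by (intros; simpl_kernel; ring); simpl_kernel; ring.
Qed.

Lemma inflow_trunc_desync_SS v b j : (S (S j) < N)%nat ->
  inflow (sum_trunc N) (age_trunc N) v (desync b (S (S j))) = pstay b (S j) * v (desync b (S j)).
Proof.
  intros Hj. unfold inflow, pstay. rewrite sum_trunc_states. cbv beta.
  destruct b; [rewrite (rsum_single _ _ j), rsum_eq0 | rewrite rsum_eq0, (rsum_single _ _ j)];
    intros; try lia; simpl_kernel; ring.
Qed.

Lemma inflow_trunc_desync_N v b : inflow (sum_trunc N) (age_trunc N) v (desync b N) =
  pstay b (N - 1) * v (desync b (N - 1)) + pstay b N * v (desync b N).
Proof.
  unfold inflow, pstay. rewrite sum_trunc_states. cbv beta.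
  destruct N as [|[|M]]; [lia|lia|]. cbn [rsum].
  replace (S (S M) - 1)%nat with (S M) by lia.
  destruct b; rewrite !rsum_eq0; intros; simpl_kernel; ring.
Qed.

Lemma sum_trunc_ext f g : (forall s, in_trunc N s -> f s = g s) -> sum_trunc N f = sum_trunc N g.
Proof.
  intros H. rewrite !sum_trunc_states, !H by apply in_trunc_sync.
  rewrite (rsum_ext N _ (fun k => g (desync true (S k)))),
    (rsum_ext N (fun k => f (desync false (S k))) (fun k => g (desync false (S k))));
    [reflexivity| |]; intros; apply H, in_trunc_desync; lia.
Qed.

Lemma sum_trunc_lin f g a c :
  sum_trunc N (fun s => a * f s + c * g s) = a * sum_trunc N f + c * sum_trunc N g.
Proof. rewrite !sum_trunc_states, !rsum_plus, !rsum_scal. ring. Qed.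

Lemma sum_trunc_sum_f (f : nat -> state -> R) T :
  sum_trunc N (fun s => sum_f_R0 (fun t => f t s) T) = sum_f_R0 (fun t => sum_trunc N (f t)) T.
Proof.
  induction T as [|T IH]; [reflexivity|]. simpl sum_f_R0. rewrite <- IH.
  rewrite <- (Rmult_1_l (sum_trunc N (fun s => sum_f_R0 _ T))), <- (Rmult_1_l (sum_trunc N (f (S T)))),
    <- sum_trunc_lin.
  apply sum_trunc_ext. intros; ring.
Qed.

Definition trunc_state (i : nat) : state :=
  match i with
  | O => sync false
  | S O => sync true
  | S (S k) => if (k <? N)%nat then desync true (S k) else desync false (S (k - N))
  end.

Lemma sum_trunc_enum f : sum_trunc N f = rsum (2 + (N + N)) (fun i => f (trunc_state i)).
Proof.
  rewrite sum_trunc_states, !rsum_add. cbn [rsum trunc_state Nat.add].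
  rewrite Rplus_0_l, <- !Rplus_assoc.
  f_equal; [f_equal|]; apply rsum_ext; intros k Hk; cbn [trunc_state Nat.add].
  - rewrite (proj2 (Nat.ltb_lt k N) Hk). reflexivity.
  - rewrite (proj2 (Nat.ltb_ge (N + k) N)), Nat.add_comm, Nat.add_sub by lia. reflexivity.
Qed.

Lemma sum_trunc_comm (f : state -> state -> R) :
  sum_trunc N (fun t => sum_trunc N (fun s => f s t))
  = sum_trunc N (fun s => sum_trunc N (fun t => f s t)).
Proof.
  rewrite sum_trunc_enum.
  rewrite (rsum_ext _ _ (fun i => rsum (2 + (N + N)) (fun j => f (trunc_state j) (trunc_state i))))
    by (intros; apply sum_trunc_enum).
  rewrite rsum_comm, sum_trunc_enum. apply rsum_ext. intros. symmetry. apply sum_trunc_enum.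
Qed.

Lemma sum_trunc_nonneg f : (forall s, in_trunc N s -> 0 <= f s) -> 0 <= sum_trunc N f.
Proof.
  intros H. rewrite sum_trunc_enum. apply rsum_nonneg. intros i Hi. apply H.
  destruct i as [|[|k]]; [apply in_trunc_sync..|]. cbn [trunc_state].
  destruct (Nat.ltb_spec k N); apply in_trunc_desync; lia.
Qed.

Lemma sum_trunc_ge_term f s : (forall s, in_trunc N s -> 0 <= f s) -> in_trunc N s ->
  f s <= sum_trunc N f.
Proof.
  intros H Hs. rewrite sum_trunc_states.
  pose proof (H _ (in_trunc_sync false)). pose proof (H _ (in_trunc_sync true)).
  assert (Hb : forall b k, (k < N)%nat -> 0 <= f (desync b (S k)))
    by (intros; apply H, in_trunc_desync; lia).
  pose proof (rsum_nonneg N _ (fun k Hk => Hb true k Hk)).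
  pose proof (rsum_nonneg N _ (fun k Hk => Hb false k Hk)).
  destruct (in_trunc_cases s Hs) as [[[] ->]|[b [[|k] [Hk ->]]]]; try lra; [lia|].
  destruct b.
  - pose proof (rsum_ge_term N (fun k => f (desync true (S k))) k ltac:(lia) (Hb true)). lra.
  - pose proof (rsum_ge_term N (fun k => f (desync false (S k))) k ltac:(lia) (Hb false)). lra.
Qed.

Lemma ind_sym s t : ind s t = ind t s.
Proof.
  destruct s as [[a b] c], t as [[a' b'] c']. unfold ind, state_eqb.
  rewrite Nat.eqb_sym. destruct a, b, a', b'; reflexivity.
Qed.

Lemma sum_trunc_ind x : in_trunc N x -> sum_trunc N (fun t => ind t x) = 1.
Proof.
  intros Hx. rewrite sum_trunc_states.
  destruct (in_trunc_cases x Hx) as [[b ->]|[b [d [Hd ->]]]].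
  - destruct b; rewrite !rsum_eq0 by (intros; simpl_kernel; reflexivity); simpl_kernel; ring.
  - destruct b; [rewrite (rsum_single _ _ (d - 1)), rsum_eq0 | rewrite rsum_eq0, (rsum_single _ _ (d - 1))];
      intros; try lia; simpl_kernel; ring.
Qed.

Lemma sum_trunc_kernel s : in_trunc N s -> sum_trunc N (kernel (age_trunc N) s) = 1.
Proof.
  intros Hs. destruct (in_trunc_cases s Hs) as [[b ->]|[b [d [Hd ->]]]].
  - rewrite (sum_trunc_ext _ (fun t => (1 - pflip b) * ind t (sync b)
                                       + pflip b * ind t (desync (negb b) (age_trunc N 0))))
      by (intros; apply kernel_sync).
    rewrite sum_trunc_lin, !sum_trunc_ind; [ring|..];
      first [apply in_trunc_sync | apply in_trunc_desync; unfold age_trunc; lia].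
  - rewrite (sum_trunc_ext _ (fun t => pflip b * ind t (sync (negb b))
      + (1 - pflip b) * (ps * transmits b d * ind t (sync b)
                          + (1 - ps * transmits b d) * ind t (desync b (age_trunc N d)))))
      by (intros; apply kernel_desync).
    rewrite !sum_trunc_lin, !sum_trunc_ind; [ring|..];
      first [apply in_trunc_sync | apply in_trunc_desync; unfold age_trunc; lia].
Qed.

Lemma sum_trunc_inflow v : sum_trunc N (inflow (sum_trunc N) (age_trunc N) v) = sum_trunc N v.
Proof.
  unfold inflow. rewrite sum_trunc_comm. apply sum_trunc_ext. intros s Hs.
  rewrite (sum_trunc_ext _ (fun t => v s * kernel (age_trunc N) s t + 0 * 0)) by (intros; ring).
  rewrite sum_trunc_lin, sum_trunc_kernel by exact Hs. ring.
Qed.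

Lemma inflow_trunc_lin v w a c t :
  inflow (sum_trunc N) (age_trunc N) (fun s => a * v s + c * w s) t =
  a * inflow (sum_trunc N) (age_trunc N) v t + c * inflow (sum_trunc N) (age_trunc N) w t.
Proof.
  unfold inflow. rewrite <- sum_trunc_lin. apply sum_trunc_ext. intros; ring.
Qed.

(** * Lumping the tail of the original chain *)

Definition lump (v : state -> R) (s : state) : R :=
  match s with
  | (x, xh, d) =>
      if (negb (Bool.eqb x xh) && (d =? N))%bool then Series (fun j => v (x, xh, N + j)%nat)
      else v s
  end.

Lemma lump_sync v b : lump v (sync b) = v (sync b).
Proof. destruct b; reflexivity. Qed.

Lemma lump_desync v b d : d <> N -> lump v (desync b d) = v (desync b d).
Proof.
  intros Hd. unfold lump, desync. rewrite (proj2 (Nat.eqb_neq d N) Hd). destruct b; reflexivity.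
Qed.

Lemma lump_desync_N v b : lump v (desync b N) = Series (fun j => v (desync b (N + j))).
Proof. unfold lump, desync. rewrite Nat.eqb_refl. destruct b; reflexivity. Qed.

Lemma lump_off_N v s : in_trunc N s -> s <> desync true N -> s <> desync false N -> lump v s = v s.
Proof.
  intros Hs H1 H2. destruct (in_trunc_cases s Hs) as [[b ->]|[b [d [Hd ->]]]]; [apply lump_sync|].
  apply lump_desync. intros ->. destruct b; auto.
Qed.

Lemma rsum_lump_weighted (v : state -> R) b (w : nat -> R) :
  (forall k, (N - 1 <= k)%nat -> w k = w (N - 1)%nat) ->
  ex_series (fun k => v (desync b (S k))) ->
  rsum N (fun k => w k * lump v (desync b (S k))) = Series (fun k => w k * v (desync b (S k))).
Proof.
  intros Hw Hv.
  assert (Hwv : ex_series (fun k => w k * v (desync b (S k)))).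
  { apply (ex_series_incr_n _ (N - 1)). apply (ex_series_incr_n _ (N - 1)) in Hv.
    apply (ex_series_ext (fun k => v (desync b (S (N - 1 + k))) * w (N - 1)%nat)).
    - intros k. rewrite (Hw (N - 1 + k)%nat) by lia. apply Rmult_comm.
    - apply ex_series_scal_r, Hv. }
  rewrite (Series_split _ (N - 1)) by exact Hwv.
  replace N with (S (N - 1)) at 1 by lia. cbn [rsum].
  f_equal.
  - apply rsum_ext. intros k Hk. rewrite lump_desync by lia. reflexivity.
  - replace (S (N - 1)) with N by lia. rewrite lump_desync_N, <- Series_scal_l.
    apply Series_ext. intros k. rewrite (Hw (N - 1 + k)%nat) by lia.
    replace (S (N - 1 + k)) with (N + k)%nat by lia. reflexivity.
Qed.

Lemma rsum_lump (v : state -> R) b : ex_series (fun k => v (desync b (S k))) ->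
  rsum N (fun k => lump v (desync b (S k))) = Series (fun k => v (desync b (S k))).
Proof.
  intros Hv. rewrite (rsum_ext _ _ (fun k => 1 * lump v (desync b (S k)))) by (intros; ring).
  rewrite rsum_lump_weighted by (auto; reflexivity).
  apply Series_ext. intros; ring.
Qed.

Lemma Series_inflow_orig_tail (v : state -> R) b : ex_series (fun k => v (desync b (S k))) ->
  Series (fun j => inflow sum_orig age_orig v (desync b (N + j))) =
  tail_ratio b * (v (desync b (N - 1)) + Series (fun j => v (desync b (N + j)))).
Proof.
  intros Hv.
  rewrite (Series_ext _ (fun j => tail_ratio b * v (desync b (N - 1 + j)))).
  2: { intros j. replace (N + j)%nat with (S (S (N - 2 + j))) by lia.
       rewrite inflow_orig_desync_SS, pstay_tail by lia.
       replace (S (N - 2 + j)) with (N - 1 + j)%nat by lia. reflexivity. }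
  rewrite Series_scal_l, Series_incr_1, Nat.add_0_r.
  - do 2 f_equal. apply Series_ext. intros j.
    replace (N - 1 + S j)%nat with (N + j)%nat by lia. reflexivity.
  - apply (ex_series_incr_n _ (N - 2)) in Hv. eapply ex_series_ext; [|exact Hv].
    intros k. cbv beta. replace (S (N - 2 + k)) with (N - 1 + k)%nat by lia. reflexivity.
Qed.

Lemma inflow_lump v t : summable_orig v -> in_trunc N t ->
  inflow (sum_trunc N) (age_trunc N) (lump v) t = lump (inflow sum_orig age_orig v) t.
Proof.
  intros Hv Ht. pose proof (summable_orig_desync v) as Hvb.
  destruct (in_trunc_cases t Ht) as [[b ->]|[b [d [Hd ->]]]].
  - rewrite lump_sync, inflow_trunc_sync, inflow_orig_sync, lump_sync, rsum_lump,
      rsum_lump_weighted; auto.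
    intros k Hk. rewrite !transmits_tail by lia. reflexivity.
  - destruct (Nat.eq_dec d N) as [->|HdN].
    + rewrite inflow_trunc_desync_N, !lump_desync_N, Series_inflow_orig_tail,
        lump_desync, !pstay_tail by (auto; lia). ring.
    + rewrite lump_desync by exact HdN.
      destruct d as [|[|j]]; [lia| |].
      * rewrite inflow_trunc_desync_1, inflow_orig_desync_1, lump_sync. reflexivity.
      * rewrite inflow_trunc_desync_SS, inflow_orig_desync_SS, lump_desync by lia. reflexivity.
Qed.

(** * Asymptotically invariant sequences of the truncated chain *)

Fixpoint profile (b : bool) (k : nat) : R :=
  match k with
  | O => 1
  | S k' => pstay b k * profile b k'
  end.

(* At age N, invariance reads u_N = r u_(N-1) + r u_N. *)
Definition profile_trunc (b : bool) (k : nat) : R :=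
  if (k <? N - 1)%nat then profile b k else tail_ratio b / (1 - tail_ratio b) * profile b (N - 2).

Lemma profile_nonneg b k : 0 <= profile b k.
Proof. induction k as [|k IH]; simpl; [lra|]. pose proof (pstay_nonneg b (S k)). nra. Qed.

Lemma profile_pos b k : (k < threshold b)%nat -> 0 < profile b k.
Proof.
  induction k as [|k IH]; intros Hk; simpl; [lra|].
  unfold pstay, transmits. destruct (Nat.leb_spec (threshold b) (S k)); [lia|].
  pose proof (pflip_bounds b). pose proof (IH ltac:(lia)). nra.
Qed.

Lemma profile_trunc_nonneg b k : 0 <= profile_trunc b k.
Proof.
  unfold profile_trunc. pose proof (tail_ratio_bounds b). pose proof (profile_nonneg b).
  destruct (k <? N - 1)%nat; [auto|]. apply Rmult_le_pos; auto. apply Rdiv_le_0_compat; lra.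
Qed.

Lemma profile_closed_form b k : profile b k = (1 - pflip b) ^ k * (1 - ps) ^ (S k - threshold b).
Proof.
  induction k as [|k IH].
  - pose proof (threshold_bounds b). replace (1 - threshold b)%nat with O by lia. simpl. ring.
  - simpl profile. rewrite IH. unfold pstay, transmits.
    destruct (Nat.leb_spec (threshold b) (S k)).
    + replace (S (S k) - threshold b)%nat with (S (S k - threshold b)) by lia. simpl. ring.
    + replace (S (S k) - threshold b)%nat with O by lia.
      replace (S k - threshold b)%nat with O by lia. simpl. ring.
Qed.

Definition mass_factor (b : bool) : R := rsum N (profile_trunc b).

Definition transmit_factor (b : bool) : R :=
  rsum N (fun k => transmits b (S k) * profile_trunc b k).

Lemma mass_factor_nonneg b : 0 <= mass_factor b.
Proof. apply rsum_nonneg. intros; apply profile_trunc_nonneg. Qed.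

Lemma transmit_factor_pos b : 0 < transmit_factor b.
Proof.
  pose proof (threshold_bounds b) as Hb. unfold transmit_factor.
  apply (Rlt_le_trans _ (transmits b (S (threshold b - 1)) * profile_trunc b (threshold b - 1))).
  - unfold transmits, profile_trunc.
    rewrite (proj2 (Nat.leb_le _ _)), (proj2 (Nat.ltb_lt _ _)) by lia.
    rewrite Rmult_1_l. apply profile_pos. lia.
  - apply (rsum_ge_term _ (fun k => transmits b (S k) * profile_trunc b k)); [lia|].
    intros k _. apply Rmult_le_pos; [|apply profile_trunc_nonneg].
    unfold transmits. destruct (threshold b <=? S k)%nat; lra.
Qed.

Definition balance_det : R :=
  pflip false * (1 - pflip true * mass_factor true) * (1 + pflip true * mass_factor false)
  + (1 - pflip false) * ps * pflip true * transmit_factor false * (1 + pflip false * mass_factor true).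

Section ApproxInvariant.
Variable u : nat -> state -> R.
Hypothesis u_residual : forall t, in_trunc N t ->
  vanishing (fun T => u T t - inflow (sum_trunc N) (age_trunc N) (u T) t).

Lemma profile_vanishing b k : (k <= N - 2)%nat ->
  vanishing (fun T => u T (desync b (S k)) - pflip (negb b) * profile b k * u T (sync (negb b))).
Proof.
  induction k as [|k IH]; intros Hk.
  - apply (vanishing_ext (fun T => u T (desync b 1) - inflow (sum_trunc N) (age_trunc N) (u T) (desync b 1))).
    + intros T. rewrite inflow_trunc_desync_1. simpl. ring.
    + apply u_residual, in_trunc_desync. lia.
  - apply (vanishing_ext (fun T =>
      1 * (u T (desync b (S (S k))) - inflow (sum_trunc N) (age_trunc N) (u T) (desync b (S (S k))))
      + pstay b (S k) * (u T (desync b (S k)) - pflip (negb b) * profile b k * u T (sync (negb b))))).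
    + intros T. rewrite inflow_trunc_desync_SS by lia. simpl profile. ring.
    + apply vanishing_lin; [apply u_residual, in_trunc_desync | apply IH]; lia.
Qed.

Lemma profile_trunc_vanishing b k : (k < N)%nat ->
  vanishing (fun T => u T (desync b (S k)) - pflip (negb b) * profile_trunc b k * u T (sync (negb b))).
Proof.
  intros Hk. unfold profile_trunc. destruct (Nat.ltb_spec k (N - 1)).
  - apply profile_vanishing. lia.
  - replace k with (N - 1)%nat by lia. replace (S (N - 1)) with N by lia.
    pose proof (tail_ratio_bounds b).
    apply (vanishing_ext (fun T =>
      / (1 - tail_ratio b) * (u T (desync b N) - inflow (sum_trunc N) (age_trunc N) (u T) (desync b N))
      + tail_ratio b / (1 - tail_ratio b)
        * (u T (desync b (S (N - 2))) - pflip (negb b) * profile b (N - 2) * u T (sync (negb b))))).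
    + intros T. rewrite inflow_trunc_desync_N, !pstay_tail by lia.
      replace (N - 1)%nat with (S (N - 2)) by lia. field. lra.
    + apply vanishing_lin; [apply u_residual, in_trunc_desync | apply profile_vanishing]; lia.
Qed.

Lemma weighted_sum_vanishing b (w : nat -> R) : vanishing (fun T =>
  rsum N (fun k => w k * u T (desync b (S k)))
  - pflip (negb b) * rsum N (fun k => w k * profile_trunc b k) * u T (sync (negb b))).
Proof.
  apply (vanishing_ext (fun T => rsum N (fun k =>
    w k * (u T (desync b (S k)) - pflip (negb b) * profile_trunc b k * u T (sync (negb b)))))).
  - intros T.
    rewrite (rsum_ext _ _ (fun k => 1 * (w k * u T (desync b (S k)))
      + (- pflip (negb b) * u T (sync (negb b))) * (w k * profile_trunc b k))) by (intros; ring).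
    rewrite rsum_plus, !rsum_scal. ring.
  - apply vanishing_rsum. intros k Hk. apply vanishing_scal, profile_trunc_vanishing, Hk.
Qed.

Lemma desync_sum_vanishing b : vanishing (fun T =>
  rsum N (fun k => u T (desync b (S k))) - pflip (negb b) * mass_factor b * u T (sync (negb b))).
Proof.
  eapply vanishing_ext; [|apply (weighted_sum_vanishing b (fun _ => 1))].
  intros T. unfold mass_factor.
  rewrite !(rsum_ext N (fun k => 1 * _) (fun k => _)) by (intros; apply Rmult_1_l). reflexivity.
Qed.

Lemma sync_balance_vanishing b : vanishing (fun T =>
  pflip b * (1 - pflip (negb b) * mass_factor (negb b)) * u T (sync b)
  - (1 - pflip b) * ps * pflip (negb b) * transmit_factor b * u T (sync (negb b))).
Proof.
  pose proof (desync_sum_vanishing (negb b)) as Hs. rewrite Bool.negb_involutive in Hs.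
  apply (vanishing_ext (fun T =>
    1 * (u T (sync b) - inflow (sum_trunc N) (age_trunc N) (u T) (sync b))
    + 1 * (pflip (negb b) * (rsum N (fun k => u T (desync (negb b) (S k)))
                              - pflip b * mass_factor (negb b) * u T (sync b))
           + (1 - pflip b) * ps * (rsum N (fun k => transmits b (S k) * u T (desync b (S k)))
              - pflip (negb b) * transmit_factor b * u T (sync (negb b)))))).
  - intros T. rewrite inflow_trunc_sync. ring.
  - apply vanishing_lin; [apply u_residual, in_trunc_sync|].
    apply vanishing_lin; [exact Hs|apply weighted_sum_vanishing].
Qed.

Lemma mass_vanishing : vanishing (fun T => sum_trunc N (u T)
  - ((1 + pflip false * mass_factor true) * u T (sync false)
     + (1 + pflip true * mass_factor false) * u T (sync true))).
Proof.
  apply (vanishing_ext (fun T =>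
    1 * (rsum N (fun k => u T (desync true (S k))) - pflip false * mass_factor true * u T (sync false))
    + 1 * (rsum N (fun k => u T (desync false (S k))) - pflip true * mass_factor false * u T (sync true)))).
  - intros T. rewrite sum_trunc_states. ring.
  - apply vanishing_lin; [apply (desync_sum_vanishing true) | apply (desync_sum_vanishing false)].
Qed.

Lemma approx_invariant_null : balance_det <> 0 -> vanishing (fun T => sum_trunc N (u T)) ->
  forall s, in_trunc N s -> vanishing (fun T => u T s).
Proof.
  intros Hdet Hsum.
  destruct (vanishing_2x2 (pflip false * (1 - pflip true * mass_factor true))
              ((1 - pflip false) * ps * pflip true * transmit_factor false)
              (1 + pflip false * mass_factor true) (1 + pflip true * mass_factor false)
              (fun T => u T (sync false)) (fun T => u T (sync true)) Hdet) as [HX HY].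
  - apply (sync_balance_vanishing false).
  - eapply vanishing_ext; [|apply (vanishing_lin 1 (-1) _ _ Hsum mass_vanishing)].
    intros T. cbv beta. ring.
  - assert (Hsync : forall b, vanishing (fun T => u T (sync b))) by (intros []; assumption).
    intros s Hs. destruct (in_trunc_cases s Hs) as [[b ->]|[b [[|k] [Hk ->]]]]; [apply Hsync|lia|].
    apply (vanishing_ext (fun T =>
      1 * (u T (desync b (S k)) - pflip (negb b) * profile_trunc b k * u T (sync (negb b)))
      + pflip (negb b) * profile_trunc b k * u T (sync (negb b)))); [intros; ring|].
    apply vanishing_lin; [apply profile_trunc_vanishing; lia|apply Hsync].
Qed.
End ApproxInvariant.

Lemma stationary_trunc_inflow nu : stationary_trunc p q ps N dbar dund nu ->
  forall t, in_trunc N t -> inflow (sum_trunc N) (age_trunc N) nu t = nu t.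
Proof. intros [_ [_ H]] t Ht. symmetry. exact (H t Ht). Qed.

(* A stationary [nu] solves the 2x2 system with right-hand side (0, 1) by a nonnegative vector;
   this rules out a vanishing determinant. *)
Lemma balance_det_ne0 nu : stationary_trunc p q ps N dbar dund nu -> balance_det <> 0.
Proof.
  intros Hst. pose proof (stationary_trunc_inflow nu Hst) as Hinv.
  destruct Hst as [Hnn [Hn1 _]].
  assert (Hnu : forall t, in_trunc N t ->
            vanishing (fun _ : nat => nu t - inflow (sum_trunc N) (age_trunc N) nu t)).
  { intros t Ht. rewrite Hinv, Rminus_diag by exact Ht. apply vanishing_0. }
  pose proof (is_lim_seq_const_inv _ _ (sync_balance_vanishing (fun _ => nu) Hnu false)) as Hbal.
  pose proof (is_lim_seq_const_inv _ _ (mass_vanishing (fun _ => nu) Hnu)) as Hmass.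
  cbv beta in Hbal, Hmass. rewrite Hn1 in Hmass. cbn [negb] in Hbal.
  pose proof (Hnn _ (in_trunc_sync false)) as HX. pose proof (Hnn _ (in_trunc_sync true)) as HY.
  pose proof (transmit_factor_pos false). pose proof (mass_factor_nonneg true).
  pose proof (mass_factor_nonneg false). pose proof (pflip_bounds true). pose proof (pflip_bounds false).
  set (c := (1 - pflip false) * ps * pflip true * transmit_factor false) in *.
  assert (Hc : 0 < c) by (unfold c; apply Rmult_lt_0_compat; [|lra];
                          apply Rmult_lt_0_compat; [|lra]; apply Rmult_lt_0_compat; lra).
  set (a := pflip false * (1 - pflip true * mass_factor true)) in *.
  set (g := 1 + pflip false * mass_factor true) in *.
  set (d := 1 + pflip true * mass_factor false) in *.
  assert (0 < g) by (unfold g; nra). assert (0 < d) by (unfold d; nra).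
  unfold balance_det. fold a c g d.
  destruct (Rle_lt_or_eq_dec 0 _ HX) as [HX0|HX0].
  - assert (0 <= a) by nra. nra.
  - rewrite <- HX0 in Hbal, Hmass. assert (nu (sync true) = 0) by nra. nra.
Qed.

Lemma approx_invariant_cvg (nu : state -> R) (u : nat -> state -> R) :
  stationary_trunc p q ps N dbar dund nu ->
  (forall t, in_trunc N t ->
     vanishing (fun T => u T t - inflow (sum_trunc N) (age_trunc N) (u T) t)) ->
  (forall T, sum_trunc N (u T) = 1) ->
  forall s, in_trunc N s -> is_lim_seq (fun T => u T s) (nu s).
Proof.
  intros Hst Hu Hsum s Hs. pose proof (stationary_trunc_inflow nu Hst) as Hinv.
  set (w := fun T s => 1 * u T s + (-1) * nu s).
  apply is_lim_seq_vanishing, (vanishing_ext (fun T => w T s)); [intros; unfold w; ring|].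
  apply (approx_invariant_null w); [|apply (balance_det_ne0 nu Hst)| |exact Hs].
  - intros t Ht. apply (vanishing_ext (fun T => u T t - inflow (sum_trunc N) (age_trunc N) (u T) t)).
    + intros T. unfold w. rewrite inflow_trunc_lin, Hinv by exact Ht. ring.
    + apply Hu, Ht.
  - apply (vanishing_ext (fun _ => 0)); [|apply vanishing_0].
    intros T. unfold w. rewrite sum_trunc_lin, Hsum. destruct Hst as [_ [-> _]]. ring.
Qed.

Lemma stationary_trunc_unique nu nu' :
  stationary_trunc p q ps N dbar dund nu -> stationary_trunc p q ps N dbar dund nu' ->
  forall s, in_trunc N s -> nu' s = nu s.
Proof.
  intros Hnu Hnu' s Hs. apply is_lim_seq_const_inv.
  apply (approx_invariant_cvg nu (fun _ => nu') Hnu); [|intros; apply Hnu'|exact Hs].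
  intros t Ht. rewrite (stationary_trunc_inflow nu' Hnu' t Ht), Rminus_diag. apply vanishing_0.
Qed.

Lemma stationary_orig_inflow nu : stationary_orig p q ps dbar dund nu ->
  forall t, in_orig t -> inflow sum_orig age_orig nu t = nu t.
Proof. intros [_ [_ [_ H]]] t Ht. symmetry. exact (H t Ht). Qed.

(** * The stationary distributions *)

Section StationaryOrig.
Variable nu : state -> R.
Hypothesis nu_stationary : stationary_orig p q ps dbar dund nu.

Lemma stationary_orig_desync b k :
  nu (desync b (S k)) = pflip (negb b) * profile b k * nu (sync (negb b)).
Proof.
  pose proof (stationary_orig_inflow nu nu_stationary) as Hinv.
  induction k as [|k IH].
  - rewrite <- Hinv by (apply in_orig_desync; lia). rewrite inflow_orig_desync_1. simpl. ring.
  - rewrite <- Hinv by (apply in_orig_desync; lia). rewrite inflow_orig_desync_SS, IH. simpl. ring.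
Qed.

Lemma stationary_orig_tail b :
  Series (fun j => nu (desync b (N + j))) = tail_ratio b / (1 - tail_ratio b) * nu (desync b (N - 1)).
Proof.
  pose proof nu_stationary as [_ [Hsum _]].
  pose proof (Series_inflow_orig_tail nu b (summable_orig_desync nu b Hsum)) as H.
  rewrite (Series_ext _ (fun j => nu (desync b (N + j)))) in H
    by (intros; apply (stationary_orig_inflow nu nu_stationary), in_orig_desync; lia).
  pose proof (tail_ratio_bounds b).
  apply (Rmult_eq_reg_r (1 - tail_ratio b)); [|lra].
  replace (tail_ratio b / (1 - tail_ratio b) * nu (desync b (N - 1)) * (1 - tail_ratio b))
    with (tail_ratio b * nu (desync b (N - 1))) by (field; lra).
  lra.
Qed.

Lemma lump_stationary : stationary_trunc p q ps N dbar dund (lump nu).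
Proof.
  pose proof nu_stationary as [Hnn [Hsum [H1 _]]].
  pose proof (summable_orig_desync nu) as Hb.
  split; [|split].
  - intros s Hs. destruct (in_trunc_cases s Hs) as [[b ->]|[b [d [Hd ->]]]].
    + rewrite lump_sync. apply Hnn. destruct b; [right; left|left]; reflexivity.
    + destruct (Nat.eq_dec d N) as [->|HdN].
      * rewrite lump_desync_N. apply Series_nonneg.
        -- intros j. apply Hnn, in_orig_desync. lia.
        -- pose proof (Hb b Hsum) as Hbb. apply (ex_series_incr_n _ (N - 1)) in Hbb.
           eapply ex_series_ext; [|exact Hbb]. intros j. cbv beta.
           replace (S (N - 1 + j)) with (N + j)%nat by lia. reflexivity.
      * rewrite lump_desync by exact HdN. apply Hnn, in_orig_desync. lia.
  - rewrite sum_trunc_states, !rsum_lump, !lump_sync by auto. exact H1.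
  - intros t Ht. change (lump nu t = inflow (sum_trunc N) (age_trunc N) (lump nu) t).
    rewrite inflow_lump by assumption. symmetry.
    destruct (in_trunc_cases t Ht) as [[b ->]|[b [d [Hd ->]]]].
    + rewrite !lump_sync. apply (stationary_orig_inflow nu nu_stationary).
      destruct b; [right; left|left]; reflexivity.
    + destruct (Nat.eq_dec d N) as [->|HdN].
      * rewrite !lump_desync_N. apply Series_ext. intros j.
        apply (stationary_orig_inflow nu nu_stationary), in_orig_desync. lia.
      * rewrite !lump_desync by exact HdN.
        apply (stationary_orig_inflow nu nu_stationary), in_orig_desync. lia.
Qed.

End StationaryOrig.

(** * Average costs *)

Definition dist_orig : nat -> state -> R := dist sum_orig (kernel age_orig).

Definition dist_trunc : nat -> state -> R := dist (sum_trunc N) (kernel (age_trunc N)).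

Lemma dist_orig_desync_eq0 t b k : (t <= k)%nat -> dist_orig t (desync b (S k)) = 0.
Proof.
  revert k. induction t as [|t IH]; intros k Hk.
  - destruct b; cbn [dist_orig dist]; simpl_kernel; reflexivity.
  - destruct k as [|k]; [lia|].
    change (inflow sum_orig age_orig (dist_orig t) (desync b (S (S k))) = 0).
    rewrite inflow_orig_desync_SS, IH by lia. ring.
Qed.

Lemma dist_orig_tail_eq0 t b j : (t <= j)%nat -> dist_orig t (desync b (N + j)) = 0.
Proof. intros Hj. replace (N + j)%nat with (S (N - 1 + j)) by lia. apply dist_orig_desync_eq0. lia. Qed.

Lemma dist_orig_summable t : summable_orig (dist_orig t).
Proof.
  split; apply (ex_series_finite _ t); intros k Hk;
    [apply (dist_orig_desync_eq0 t true) | apply (dist_orig_desync_eq0 t false)]; lia.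
Qed.

Lemma dist_trunc_lump t s : in_trunc N s -> dist_trunc t s = lump (dist_orig t) s.
Proof.
  revert s. induction t as [|t IH]; intros s Hs.
  - change (dist_orig 0 s = lump (dist_orig 0) s).
    destruct (in_trunc_cases s Hs) as [[b ->]|[b [d [Hd ->]]]]; [symmetry; apply lump_sync|].
    destruct (Nat.eq_dec d N) as [->|HdN]; [|symmetry; apply lump_desync, HdN].
    rewrite lump_desync_N, Series_eq0 by (intros; apply dist_orig_tail_eq0; lia).
    replace N with (S (N - 1)) at 1 by lia. apply dist_orig_desync_eq0. lia.
  - change (inflow (sum_trunc N) (age_trunc N) (dist_trunc t) s
            = lump (inflow sum_orig age_orig (dist_orig t)) s).
    rewrite <- inflow_lump by (apply dist_orig_summable || exact Hs).
    unfold inflow. apply sum_trunc_ext. intros. rewrite IH by assumption. reflexivity.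
Qed.

Lemma dist_trunc_nonneg t s : in_trunc N s -> 0 <= dist_trunc t s.
Proof.
  revert s. induction t as [|t IH]; intros s Hs.
  - cbn [dist_trunc dist]. unfold ind. destruct state_eqb; lra.
  - apply sum_trunc_nonneg. intros. apply Rmult_le_pos; [apply IH; assumption|apply kernel_nonneg].
Qed.

Lemma dist_trunc_sum t : sum_trunc N (dist_trunc t) = 1.
Proof.
  induction t as [|t IH].
  - rewrite (sum_trunc_ext _ (fun s => ind s (sync false))) by (intros; apply ind_sym).
    apply sum_trunc_ind, in_trunc_sync.
  - change (sum_trunc N (inflow (sum_trunc N) (age_trunc N) (dist_trunc t)) = 1).
    rewrite sum_trunc_inflow. exact IH.
Qed.

Lemma dist_trunc_le1 t s : in_trunc N s -> dist_trunc t s <= 1.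
Proof.
  intros Hs. rewrite <- (dist_trunc_sum t). apply sum_trunc_ge_term; [|exact Hs].
  intros; apply dist_trunc_nonneg; assumption.
Qed.

Definition dist_trunc_avg (T : nat) (s : state) : R :=
  / INR (S T) * sum_f_R0 (fun t => dist_trunc t s) T.

Lemma inflow_dist_trunc_avg T x :
  inflow (sum_trunc N) (age_trunc N) (dist_trunc_avg T) x =
  / INR (S T) * sum_f_R0 (fun t => dist_trunc (S t) x) T.
Proof.
  unfold inflow, dist_trunc_avg.
  rewrite (sum_trunc_ext _ (fun s =>
    / INR (S T) * sum_f_R0 (fun t => dist_trunc t s * kernel (age_trunc N) s x) T + 0 * 0)).
  - rewrite sum_trunc_lin, sum_trunc_sum_f, Rmult_0_l, Rplus_0_r. reflexivity.
  - intros s _. rewrite Rmult_assoc, (Rmult_comm (sum_f_R0 _ T)), scal_sum. ring.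
Qed.

Lemma dist_trunc_avg_cvg nuN : stationary_trunc p q ps N dbar dund nuN ->
  forall s, in_trunc N s -> is_lim_seq (fun T => dist_trunc_avg T s) (nuN s).
Proof.
  intros Hst. apply (approx_invariant_cvg nuN dist_trunc_avg Hst).
  - intros t Ht.
    apply (vanishing_ext (fun T => / INR (S T) * (dist_trunc O t - dist_trunc (S T) t))).
    + intros T. rewrite inflow_dist_trunc_avg. unfold dist_trunc_avg.
      rewrite <- (sum_f_R0_telescope (fun u => dist_trunc u t)), minus_sum. ring.
    + apply (vanishing_bounded_avg _ 1). intros T.
      pose proof (dist_trunc_nonneg O t Ht). pose proof (dist_trunc_le1 O t Ht).
      pose proof (dist_trunc_nonneg (S T) t Ht). pose proof (dist_trunc_le1 (S T) t Ht).
      apply Rabs_le. lra.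
  - intros T. unfold dist_trunc_avg.
    rewrite (sum_trunc_ext _ (fun s => / INR (S T) * sum_f_R0 (fun t => dist_trunc t s) T + 0 * 0))
      by (intros; ring).
    rewrite sum_trunc_lin, sum_trunc_sum_f, (sum_eq _ (fun _ => 1)) by (intros; apply dist_trunc_sum).
    rewrite sum_cte. field. apply not_0_INR. lia.
Qed.

Variables beta lam : R.

Definition weight (b : bool) : R := if b then beta else 1 - beta.

Lemma stage_desync age b d :
  stage p q ps age beta lam (desync b d) (switching dbar dund (desync b d)) =
  pstay b d * weight b * INR (age d) + lam * transmits b d.
Proof.
  unfold stage, pstay. rewrite Enext_desync.
  unfold transmits, threshold. destruct b; cbn [cost sync desync negb switching weight];
    [destruct (dbar <=? d)%nat | destruct (dund <=? d)%nat]; ring.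
Qed.

Lemma stage_sync age b :
  stage p q ps age beta lam (sync b) (switching dbar dund (sync b)) =
  pflip b * weight (negb b) * INR (age 0%nat).
Proof. unfold stage. rewrite Enext_sync. destruct b; cbn [cost sync desync negb switching weight]; ring. Qed.

Definition stage_orig (s : state) : R := stage p q ps age_orig beta lam s (switching dbar dund s).

Definition stage_trunc (s : state) : R := stage p q ps (age_trunc N) beta lam s (switching dbar dund s).

Definition tail_mass (b : bool) (t : nat) : R := Series (fun j => dist_orig t (desync b (N + j))).

Definition moment (b : bool) (t : nat) : R := Series (fun j => INR (S j) * dist_orig t (desync b (N + j))).

Lemma ex_series_dist_orig_tail t b (c : nat -> R) :
  ex_series (fun j => c j * dist_orig t (desync b (N + j))).
Proof. apply (ex_series_finite _ t). intros. rewrite dist_orig_tail_eq0 by lia. ring. Qed.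

Lemma tail_mass_dist_trunc b t : tail_mass b t = dist_trunc t (desync b N).
Proof.
  rewrite dist_trunc_lump, lump_desync_N by (apply in_trunc_desync; lia). reflexivity.
Qed.

(* At age N + j the original chain pays r * weight b * (j + 1) more than the truncated one at N. *)
Lemma branch_cost_split t b :
  Series (fun k => dist_orig t (desync b (S k)) * stage_orig (desync b (S k))) =
  rsum N (fun k => dist_trunc t (desync b (S k)) * stage_trunc (desync b (S k)))
  + weight b * tail_ratio b * moment b t.
Proof.
  rewrite (Series_split _ (N - 1)).
  2: { apply (ex_series_finite _ t). intros. rewrite dist_orig_desync_eq0 by lia. ring. }
  replace N with (S (N - 1)) at 2 by lia. cbn [rsum]. replace (S (N - 1)) with N by lia.
  rewrite (rsum_ext (N - 1) (fun k => dist_trunc t _ * _)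
                    (fun k => dist_orig t (desync b (S k)) * stage_orig (desync b (S k)))).
  2: { intros k Hk. rewrite dist_trunc_lump, lump_desync by (try apply in_trunc_desync; lia).
       unfold stage_orig, stage_trunc. rewrite !stage_desync. unfold age_orig, age_trunc.
       rewrite Nat.min_l by lia. reflexivity. }
  rewrite <- tail_mass_dist_trunc. unfold stage_trunc.
  rewrite stage_desync, pstay_tail, transmits_tail by lia.
  unfold age_trunc. rewrite Nat.min_r by lia.
  rewrite (Series_ext _ (fun j =>
    (tail_ratio b * weight b * INR N + lam * 1) * dist_orig t (desync b (N + j))
    + weight b * tail_ratio b * (INR (S j) * dist_orig t (desync b (N + j))))).
  2: { intros j. replace (S (N - 1 + j)) with (N + j)%nat by lia. unfold stage_orig.
       rewrite stage_desync, pstay_tail, transmits_tail by lia. unfold age_orig.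
       rewrite S_INR, plus_INR, S_INR. ring. }
  rewrite Series_plus, !Series_scal_l.
  - unfold tail_mass, moment. ring.
  - apply (ex_series_dist_orig_tail t b (fun _ => _)).
  - eapply ex_series_ext;
      [|apply (ex_series_dist_orig_tail t b (fun j => weight b * tail_ratio b * INR (S j)))].
    intros. apply Rmult_assoc.
Qed.

Lemma cost_split t :
  sum_orig (fun s => dist_orig t s * stage_orig s) =
  sum_trunc N (fun s => dist_trunc t s * stage_trunc s)
  + weight true * tail_ratio true * moment true t + weight false * tail_ratio false * moment false t.
Proof.
  rewrite sum_orig_states, sum_trunc_states, !branch_cost_split.
  assert (Hsync : forall b,
    dist_orig t (sync b) * stage_orig (sync b) = dist_trunc t (sync b) * stage_trunc (sync b)).
  { intros b. rewrite dist_trunc_lump, lump_sync by apply in_trunc_sync.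
    unfold stage_orig, stage_trunc. rewrite !stage_sync. unfold age_orig, age_trunc.
    rewrite Nat.min_l by lia. reflexivity. }
  rewrite !Hsync. ring.
Qed.

Lemma tail_mass_0 b : tail_mass b 0 = 0.
Proof. apply Series_eq0. intros. apply dist_orig_tail_eq0. lia. Qed.

Lemma moment_0 b : moment b 0 = 0.
Proof. apply Series_eq0. intros. rewrite dist_orig_tail_eq0 by lia. ring. Qed.

Lemma tail_mass_succ b t :
  tail_mass b (S t) = tail_ratio b * (dist_orig t (desync b (N - 1)) + tail_mass b t).
Proof.
  apply Series_inflow_orig_tail. apply summable_orig_desync, dist_orig_summable.
Qed.

Lemma moment_succ b t : moment b (S t) = tail_ratio b * moment b t + tail_mass b (S t).
Proof.
  rewrite tail_mass_succ. unfold moment.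
  rewrite (Series_ext _ (fun j => tail_ratio b * (INR (S j) * dist_orig t (desync b (N - 1 + j))))).
  2: { intros j. change (dist_orig (S t)) with (inflow sum_orig age_orig (dist_orig t)).
       replace (N + j)%nat with (S (S (N - 2 + j))) by lia.
       rewrite inflow_orig_desync_SS, pstay_tail by lia.
       replace (S (N - 2 + j)) with (N - 1 + j)%nat by lia. ring. }
  rewrite Series_scal_l, Series_incr_1.
  2: { apply (ex_series_finite _ t). intros k Hk.
       replace (N - 1 + k)%nat with (S (N - 2 + k)) by lia.
       rewrite dist_orig_desync_eq0 by lia. ring. }
  rewrite (Series_ext _ (fun j =>
    INR (S j) * dist_orig t (desync b (N + j)) + dist_orig t (desync b (N + j)))).
  2: { intros j. replace (N - 1 + S j)%nat with (N + j)%nat by lia. rewrite (S_INR (S j)). ring. }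
  rewrite Series_plus.
  - unfold tail_mass. rewrite Nat.add_0_r. simpl INR. ring.
  - apply ex_series_dist_orig_tail.
  - eapply ex_series_ext; [|apply (ex_series_dist_orig_tail t b (fun _ => 1))].
    intros. apply Rmult_1_l.
Qed.

Lemma tail_mass_bounds b t : 0 <= tail_mass b t <= 1.
Proof.
  rewrite tail_mass_dist_trunc. pose proof (in_trunc_desync b N ltac:(lia)).
  split; [apply dist_trunc_nonneg | apply dist_trunc_le1]; assumption.
Qed.

Lemma moment_bounds b t : 0 <= moment b t <= / (1 - tail_ratio b).
Proof.
  pose proof (tail_ratio_bounds b) as Hr. set (r := tail_ratio b) in *.
  induction t as [|t IH].
  - rewrite moment_0. split; [lra|]. left. apply Rinv_0_lt_compat. lra.
  - rewrite moment_succ. fold r. pose proof (tail_mass_bounds b (S t)).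
    assert (r * moment b t <= r * / (1 - r)) by (apply Rmult_le_compat_l; lra).
    assert (0 <= r * moment b t) by (apply Rmult_le_pos; lra).
    split; [lra|]. replace (/ (1 - r)) with (r * / (1 - r) + 1) by (field; lra). lra.
Qed.

Lemma moment_sum b T :
  (1 - tail_ratio b) * sum_f_R0 (moment b) T = sum_f_R0 (tail_mass b) T - tail_ratio b * moment b T.
Proof.
  induction T as [|T IH]; simpl.
  - rewrite moment_0, tail_mass_0. ring.
  - rewrite Rmult_plus_distr_l, IH, moment_succ. ring.
Qed.

Lemma moment_avg_cvg nuN b : stationary_trunc p q ps N dbar dund nuN ->
  is_lim_seq (fun T => / INR (S T) * sum_f_R0 (moment b) T) (nuN (desync b N) / (1 - tail_ratio b)).
Proof.
  intros Hst. pose proof (tail_ratio_bounds b) as Hr.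
  pose proof (dist_trunc_avg_cvg nuN Hst (desync b N) (in_trunc_desync b N ltac:(lia))) as Havg.
  apply is_lim_seq_vanishing in Havg. apply is_lim_seq_vanishing.
  apply (vanishing_ext (fun T => / (1 - tail_ratio b) * (dist_trunc_avg T (desync b N) - nuN (desync b N))
                                 + (- tail_ratio b / (1 - tail_ratio b)) * (/ INR (S T) * moment b T))).
  - intros T. unfold dist_trunc_avg.
    rewrite (sum_eq _ (tail_mass b)) by (intros; symmetry; apply tail_mass_dist_trunc).
    pose proof (moment_sum b T) as Hsum.
    replace (sum_f_R0 (moment b) T)
      with ((sum_f_R0 (tail_mass b) T - tail_ratio b * moment b T) / (1 - tail_ratio b))
      by (rewrite <- Hsum; field; lra).
    field. split; [lra|apply not_0_INR; lia].
  - apply vanishing_lin; [exact Havg|]. apply (vanishing_bounded_avg _ (/ (1 - tail_ratio b))).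
    intros T. pose proof (moment_bounds b T). rewrite Rabs_right; lra.
Qed.

Lemma L_trunc_moments nuN : stationary_trunc p q ps N dbar dund nuN ->
  L_trunc p q ps beta lam N dbar dund =
  Rbar_minus (L_orig p q ps beta lam dbar dund)
    (weight true * tail_ratio true * (nuN (desync true N) / (1 - tail_ratio true))
     + weight false * tail_ratio false * (nuN (desync false N) / (1 - tail_ratio false))).
Proof.
  intros Hst.
  set (gap := weight true * tail_ratio true * _ + _).
  change (LimSup_seq (fun T => / INR (S T) *
            sum_f_R0 (fun t => sum_trunc N (fun s => dist_trunc t s * stage_trunc s)) T)
          = Rbar_minus (LimSup_seq (fun T => / INR (S T) *
              sum_f_R0 (fun t => sum_orig (fun s => dist_orig t s * stage_orig s)) T)) gap).
  rewrite <- (LimSup_seq_minus_lim _ (fun T =>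
      weight true * tail_ratio true * (/ INR (S T) * sum_f_R0 (moment true) T)
      + weight false * tail_ratio false * (/ INR (S T) * sum_f_R0 (moment false) T))).
  - f_equal. apply functional_extensionality. intros T.
    rewrite (sum_eq _ (fun t => sum_orig (fun s => dist_orig t s * stage_orig s)
                                - weight true * tail_ratio true * moment true t
                                - weight false * tail_ratio false * moment false t))
      by (intros; rewrite cost_split; ring).
    rewrite !minus_sum, !sum_f_R0_scal. ring.
  - apply is_lim_seq_plus'; apply is_lim_seq_mult'; auto using is_lim_seq_const, moment_avg_cvg.
Qed.

Definition gap_term (nu : state -> R) (b : bool) : R :=
  weight b * nu (sync (negb b)) * pflip (negb b) * (1 - pflip b) ^ N
  * (1 - ps) ^ (N - threshold b + 1) / (1 - tail_ratio b) ^ 2.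

Section Stationary.
Variables nu nuN : state -> R.
Hypothesis nu_stationary : stationary_orig p q ps dbar dund nu.
Hypothesis nuN_stationary : stationary_trunc p q ps N dbar dund nuN.

Lemma stationary_trunc_lump s : in_trunc N s -> nuN s = lump nu s.
Proof. apply stationary_trunc_unique; [apply lump_stationary, nu_stationary|exact nuN_stationary]. Qed.

Lemma stationary_trunc_off_N s : in_trunc N s -> s <> desync true N -> s <> desync false N ->
  nuN s = nu s.
Proof. intros Hs H1 H2. rewrite stationary_trunc_lump, lump_off_N; auto. Qed.

Lemma stationary_trunc_N b :
  nuN (desync b N) = tail_ratio b / (1 - tail_ratio b) * nu (desync b (N - 1)).
Proof.
  rewrite stationary_trunc_lump, lump_desync_N by (apply in_trunc_desync; lia).
  apply stationary_orig_tail, nu_stationary.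
Qed.

Lemma L_trunc_gap : L_trunc p q ps beta lam N dbar dund =
  Rbar_minus (L_orig p q ps beta lam dbar dund) (gap_term nu true + gap_term nu false).
Proof.
  rewrite (L_trunc_moments nuN nuN_stationary). do 2 f_equal.
  assert (Hterm : forall b,
    weight b * tail_ratio b * (nuN (desync b N) / (1 - tail_ratio b)) = gap_term nu b).
  { intros b. pose proof (tail_ratio_bounds b). pose proof (threshold_bounds b).
    rewrite stationary_trunc_N. replace (N - 1)%nat with (S (N - 2)) by lia.
    rewrite (stationary_orig_desync nu nu_stationary), profile_closed_form.
    unfold gap_term, tail_ratio in *.
    replace N with (S (S (N - 2))) at 3 by lia.
    replace (N - threshold b + 1)%nat with (S (S (S (N - 2) - threshold b))) by lia.
    cbn [pow]. field. lra. }
  rewrite !Hterm. reflexivity.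
Qed.

End Stationary.
End Model.

Theorem proposition5 (p q ps beta lam : R) (dbar dund N : nat)
  (nu nuN : state -> R) :
  0 < p < 1 -> 0 < q < 1 -> 0 < ps <= 1 -> 0 <= beta <= 1 -> 0 <= lam ->
  (1 <= dbar)%nat -> (1 <= dund)%nat -> (Nat.max dbar dund < N)%nat ->
  stationary_orig p q ps dbar dund nu ->
  stationary_trunc p q ps N dbar dund nuN ->
  (forall s, in_trunc N s -> s <> (true, false, N) -> s <> (false, true, N) ->
     nuN s = nu s) /\
  nuN (true, false, N) =
    (1 - q) * (1 - ps) / (1 - (1 - q) * (1 - ps)) * nu (true, false, (N - 1)%nat) /\
  nuN (false, true, N) =
    (1 - p) * (1 - ps) / (1 - (1 - p) * (1 - ps)) * nu (false, true, (N - 1)%nat) /\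
  L_trunc p q ps beta lam N dbar dund =
    Rbar_minus (L_orig p q ps beta lam dbar dund)
      (Finite (beta * nu (false, false, 0%nat) * p * (1 - q) ^ N
                 * (1 - ps) ^ (N - dbar + 1) / (1 - (1 - q) * (1 - ps)) ^ 2
               + (1 - beta) * nu (true, true, 0%nat) * q * (1 - p) ^ N
                 * (1 - ps) ^ (N - dund + 1) / (1 - (1 - p) * (1 - ps)) ^ 2)).
Proof.
  intros hp hq hps _ _ hdbar hdund hN Hnu HnuN.
  assert (hdbar' : (1 <= dbar < N)%nat) by lia.
  assert (hdund' : (1 <= dund < N)%nat) by lia.
  split; [|split; [|split]].
  - exact (stationary_trunc_off_N p q ps dbar dund N hp hq hps hdbar' hdund' nu nuN Hnu HnuN).
  - exact (stationary_trunc_N p q ps dbar dund N hp hq hps hdbar' hdund' nu nuN Hnu HnuN true).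
  - exact (stationary_trunc_N p q ps dbar dund N hp hq hps hdbar' hdund' nu nuN Hnu HnuN false).
  - exact (L_trunc_gap p q ps dbar dund N hp hq hps hdbar' hdund' beta lam nu nuN Hnu HnuN).
Qed.
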